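(* Let $G$ be a connected graph on $n\ge 2$ vertices. Then $$\frac{2}{n-1}\le \gamma(G)\le \frac{n}{n-1}.$$ Equality holds in the lower bound if and only if $G$ is isomorphic to the path $P_n$, and equality holds in the upper bound if and only if $G$ is isomorphic to the complete graph $K_n$.
   Context: For a finite simple undirected graph $G$ with $n$ vertices, let $\mathcal{F}=\{x\in\mathbb{R}^{V(G)} : \sum_{v} x_v = 0,\ \|x\|_\infty = 1\}$, for $x\in\mathcal{F}$ let $\gamma_x(G)=\max_{uv\in E(G)}|x_u-x_v|$, and $\gamma(G)=\min_{x\in\mathcal{F}}\gamma_x(G)$. *)

From mathcomp Require Import all_boot all_order all_algebra.
From mathcomp Require Import boolp classical_sets reals.
Set Implicit Arguments. Unset Strict Implicit. Unset Printing Implicit Defensive.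
Import Order.TTheory GRing.Theory Num.Theory.
Local Open Scope ring_scope.
Local Open Scope classical_set_scope.

Definition simple_graph (T : finType) (e : rel T) : Prop :=
  symmetric e /\ irreflexive e.

Definition connected_graph (T : finType) (e : rel T) : Prop :=
  forall u v : T, connect e u v.

Definition supnorm (R : realType) (T : finType) (x : T -> R) : R :=
  \big[Num.max/0]_(v : T) `|x v|.

Definition Fset (R : realType) (T : finType) : set (T -> R) :=
  [set x | \sum_(v : T) x v = 0 /\ supnorm x = 1].

Definition gamma_x (R : realType) (T : finType) (e : rel T) (x : T -> R) : R :=
  \big[Num.max/0]_(p : T * T | e p.1 p.2) `|x p.1 - x p.2|.

(* gamma(G) = min over x in F of gamma_x(G) (taken as an infimum) *)
Definition gamma (R : realType) (T : finType) (e : rel T) : R :=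
  inf [set gamma_x e x | x in @Fset R T].

Definition iso_path (T : finType) (e : rel T) : Prop :=
  exists f : T -> 'I_#|T|, bijective f /\
    forall u v, e u v = ((f u).+1 == f v) || ((f v).+1 == f u).

Definition iso_complete (T : finType) (e : rel T) : Prop :=
  forall u v, e u v = (u != v).

Arguments gamma R {T} e.

From mathcomp Require Import all_boot all_order all_algebra.
From mathcomp Require Import boolp classical_sets reals.
From mathcomp Require Import zify ring lra.
Set Implicit Arguments. Unset Strict Implicit. Unset Printing Implicit Defensive.
Import Order.TTheory GRing.Theory Num.Theory.
Local Open Scope ring_scope.

(* Let x be feasible and i a vertex with |x_i| = 1.  Along a
   shortest path x changes by at most gamma_x per edge, so
   n = |sum_v (x_i - x_v)| <= gamma_x * sum_v d(i, v).  The distances from i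
   fill every level 0 .. max d(i, _), so a vertex at distance k has at least
   k vertices strictly closer to i; hence sum_v d(i, v) <= n (n - 1) / 2, with
   equality only if the distances are pairwise distinct, i.e. only if G is a
   path with end i.  The "star" vector (1 at one vertex, -1/(n-1) elsewhere) has
   gamma_x <= n/(n-1); if u, w are not adjacent, e_u - e_w has gamma_x <= 1;
   and in K_n every distance sum is n - 1, which forces gamma_x >= n/(n-1). *)

Section Distance.
Variables (T : finType) (e : rel T).

Fixpoint ball (i : T) (k : nat) : {set T} :=
  if k is k'.+1 then ball i k' :|: [set w | [exists u in ball i k', e u w]]
  else [set i].

Lemma ball_step i k u w : u \in ball i k -> e u w -> w \in ball i k.+1.
Proof.
by move=> ui uw; rewrite /= !inE; apply/orP; right; apply/existsP; exists u; rewrite ui.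
Qed.

Lemma ball_last i p a k :
  path e a p -> a \in ball i k -> last a p \in ball i (k + size p).
Proof.
elim: p a k => [|b p IH] a k /=; first by rewrite addn0.
by case/andP=> ab bp ai; rewrite addnS -addSn; apply: IH => //; exact: ball_step ai ab.
Qed.

Hypothesis e_connected : connected_graph e.

Lemma ball_exhaustive i v : exists k, v \in ball i k.
Proof.
have /connectP[p ip ->] := e_connected i v.
by exists (0 + size p)%N; apply: ball_last; rewrite ?inE.
Qed.

Definition dist i v : nat := ex_minn (ball_exhaustive i v).

Lemma dist_ball i v : v \in ball i (dist i v).
Proof. by rewrite /dist; case: ex_minnP. Qed.

Lemma dist_min i v k : v \in ball i k -> (dist i v <= k)%N.
Proof. by rewrite /dist; case: ex_minnP => m _ min_m /min_m. Qed.

Lemma dist_edge i u v : e u v -> (dist i v <= (dist i u).+1)%N.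
Proof. by move=> uv; apply/dist_min/ball_step/uv; exact: dist_ball. Qed.

Lemma dist_self i : dist i i = 0%N.
Proof. by apply/eqP; rewrite -leqn0; apply: dist_min; rewrite inE. Qed.

Lemma dist_pred i v : v != i -> exists2 u, e u v & (dist i u).+1 = dist i v.
Proof.
move=> vi; have := dist_ball i v; case dv: (dist i v) => [|k] /=.
  by rewrite inE (negbTE vi).
case/setUP => [vk|]; first by have := dist_min vk; rewrite dv ltnn.
rewrite inE => /existsP[u /andP[uk uv]]; exists u => //.
by have := dist_min uk; have := dist_edge i uv; lia.
Qed.

Lemma dist_eq0 i v : (dist i v == 0%N) = (v == i).
Proof.
apply/eqP/eqP => [d0|->]; last exact: dist_self.
by have := dist_ball i v; rewrite d0 inE => /eqP.
Qed.

Lemma dist_levels i v : (0 < dist i v)%N -> exists u, (dist i u).+1 = dist i v.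
Proof. by rewrite lt0n dist_eq0 => /dist_pred[u _ <-]; exists u. Qed.

Lemma dist_lipschitz (R : numDomainType) (x : T -> R) d i v :
  (forall u w, e u w -> `|x u - x w| <= d) -> `|x i - x v| <= (dist i v)%:R * d.
Proof.
move=> xd; have [m] := ubnP (dist i v); elim: m v => // m IH v.
have [->|vi] := eqVneq v i; first by rewrite subrr dist_self normr0 mul0r.
have [u uv <-] := dist_pred vi; rewrite ltnS => um.
rewrite -addn1 natrD mulrDl mul1r (le_trans (ler_distD (x u) _ _)) //.
by apply: lerD; [exact: IH | exact: xd].
Qed.

End Distance.

Lemma sum_neq_card (T : finType) (v : T) : (\sum_(w : T) (w != v) = #|T|.-1)%N.
Proof.
rewrite (bigD1 v) //= eqxx add0n -(cardC1 v) -sum1_card.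
by apply: eq_bigr => w ->.
Qed.

Lemma double_bin2 m : ('C(m, 2)).*2 = (m * m.-1)%N.
Proof.
rewrite bin2 -[RHS]odd_double_half.
by case: m => //= m; rewrite oddM /= andNb.
Qed.

Section Levels.
Variables (T : finType) (b : T -> nat).

Definition level_rank v := (\sum_w (b w < b v))%N.

Lemma level_rank_lt_card v : (level_rank v < #|T|)%N.
Proof.
have card_gt0 : (0 < #|T|)%N by apply/card_gt0P; exists v.
rewrite -(prednK card_gt0) ltnS -(sum_neq_card v); apply: leq_sum => w _.
by case: eqVneq => [->|]; rewrite ?ltnn ?leq_b1.
Qed.

Lemma double_sum_level_rank :
  ((\sum_v level_rank v).*2 = \sum_v \sum_w (b w != b v))%N.
Proof.
have swap : (\sum_v level_rank v = \sum_v \sum_w (b v < b w))%N.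
  by rewrite exchange_big.
rewrite -addnn {2}swap -big_split /=; apply: eq_bigr => v _.
rewrite -big_split /=; apply: eq_bigr => w _.
by case: (ltngtP (b w) (b v)).
Qed.

Lemma double_sum_level_rank_le_iff :
  ((\sum_v level_rank v).*2 <= #|T| * #|T|.-1 ?= iff injectiveb b)%N.
Proof.
have -> : (#|T| * #|T|.-1 = \sum_(v : T) \sum_(w : T) (w != v))%N.
  by rewrite (eq_bigr _ (fun v _ => sum_neq_card v)) sum_nat_const.
rewrite double_sum_level_rank.
set same := fun v w => ((b w != b v) : nat) == (w != v).
have -> : injectiveb b = [forall (v | true), [forall (w | true), same v w]].
  apply/injectiveP/idP => [inj|/forall_inP same_b u v buv].
    apply/forall_inP => v _; apply/forall_inP => w _.
    rewrite /same; case: (eqVneq w v) => [->|/(contra_neq (@inj w v))->] //.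
    by rewrite eqxx.
  have /forall_inP/(_ u isT) := same_b v isT.
  by rewrite /same buv eqxx /= eq_sym eqb0 negbK => /eqP.
apply: leqif_sum => v _; apply: leqif_sum => w _; apply: leqif_eq.
by case: (eqVneq w v) => [->|]; rewrite ?eqxx ?leq_b1.
Qed.

Hypothesis b_levels : forall v, (0 < b v)%N -> exists u, (b u).+1 = b v.

Lemma level_le_rank v : (b v <= level_rank v)%N.
Proof.
have [m] := ubnP (b v); elim: m v => // m IH v; rewrite ltnS => bvm.
have [bv0|/b_levels[u buv]] := posnP (b v); first by rewrite bv0.
have bu_rank : (b u <= level_rank u)%N by apply: IH; rewrite -buv in bvm.
rewrite -buv (leq_ltn_trans bu_rank) // /level_rank (bigD1 u) //=.
rewrite [X in (_ < X)%N](bigD1 u) //= ltnn -buv ltnSn ltnS.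
by apply: leq_sum => w _; case: ltnP => // /ltn_trans->.
Qed.

Lemma level_lt_card v : (b v < #|T|)%N.
Proof. exact: leq_ltn_trans (level_le_rank v) (level_rank_lt_card v). Qed.

Lemma sum_levels_le_sum_rank : (\sum_v b v <= \sum_v level_rank v)%N.
Proof. by apply: leq_sum => v _; exact: level_le_rank. Qed.

Lemma double_sum_levels_le : ((\sum_v b v).*2 <= #|T| * #|T|.-1)%N.
Proof.
apply: leq_trans double_sum_level_rank_le_iff.
by rewrite leq_double sum_levels_le_sum_rank.
Qed.

Lemma double_sum_levels_lt :
  ~ injective b -> ((\sum_v b v).*2 + 2 <= #|T| * #|T|.-1)%N.
Proof.
move=> /injectiveP/negbTE not_inj.
have /leqifP := double_sum_level_rank_le_iff; rewrite not_inj => lt_rank.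
move: lt_rank (sum_levels_le_sum_rank); rewrite -double_bin2 -!mul2n; lia.
Qed.

End Levels.

Section Gamma.
Variables (R : realType) (T : finType) (e : rel T).

Lemma gamma_x_ge0 (x : T -> R) : 0 <= gamma_x e x.
Proof. exact: bigmax_ge_id. Qed.

Lemma edge_le_gamma_x (x : T -> R) u v : e u v -> `|x u - x v| <= gamma_x e x.
Proof.
by move=> uv; apply: (le_bigmax_cond _ (P := fun p : T * T => e p.1 p.2) (j := (u, v))).
Qed.

Lemma gamma_x_le (x : T -> R) c :
  0 <= c -> (forall u v, e u v -> `|x u - x v| <= c) -> gamma_x e x <= c.
Proof. by move=> c_ge0 xc; apply: bigmax_le => // -[u v]; exact: xc. Qed.

Lemma Fset_norm1 (x : T -> R) : Fset x -> exists i, `|x i| = 1.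
Proof.
case=> _; rewrite /supnorm; case: (pickP (fun _ : T => true)) => [j _|T0].
  have [i _ ->] := eq_bigmax j xpredT (fun v => `|x v|) isT (fun v _ => normr_ge0 (x v)).
  by exists i.
by rewrite big_pred0 // => /eqP; rewrite eq_sym oner_eq0.
Qed.

Lemma FsetP (x : T -> R) i :
  \sum_v x v = 0 -> (forall v, `|x v| <= 1) -> `|x i| = 1 -> Fset x.
Proof.
move=> sum0 x_le1 xi1; split=> //; apply/le_anti.
by rewrite bigmax_le //= -{1}xi1 (le_bigmax_cond _ (j := i)).
Qed.

Lemma gamma_le_gamma_x (x : T -> R) : Fset x -> gamma R e <= gamma_x e x.
Proof.
by move=> Fx; apply: ge_inf; [exists 0 => _ [y _ <-]; exact: gamma_x_ge0 | exists x].
Qed.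

Lemma gamma_ge (c : R) (x0 : T -> R) :
  Fset x0 -> (forall x, Fset x -> c <= gamma_x e x) -> c <= gamma R e.
Proof.
move=> Fx0 c_le; apply: lb_le_inf; first by exists (gamma_x e x0), x0.
by move=> _ [x Fx <-]; exact: c_le.
Qed.

Lemma gamma_le (x : T -> R) c :
  Fset x -> 0 <= c -> (forall u v, e u v -> `|x u - x v| <= c) -> gamma R e <= c.
Proof.
by move=> Fx c_ge0 xc; apply: le_trans (gamma_le_gamma_x Fx) (gamma_x_le c_ge0 xc).
Qed.

End Gamma.

Section Witnesses.
Variables (R : realType) (T : finType).
Hypothesis card_ge2 : (2 <= #|T|)%N.
Local Notation n := (#|T|%:R : R).

Lemma natr_card_pred : (#|T|.-1%:R : R) = n - 1.
Proof. by rewrite -subn1 natrB // ltnW. Qed.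

Lemma card_pred_ge1 : 1 <= n - 1.
Proof. by rewrite -natr_card_pred ler1n -ltnS prednK // ltnW. Qed.

Lemma card_pred_gt0 : 0 < n - 1.
Proof. exact: lt_le_trans ltr01 card_pred_ge1. Qed.

Definition star_vector (i : T) : T -> R :=
  fun v => if v == i then 1 else - (n - 1)^-1.

Lemma star_vector_Fset i : Fset (star_vector i).
Proof.
have c_le1 : (n - 1)^-1 <= 1 by rewrite invf_le1 ?card_pred_gt0 ?card_pred_ge1.
apply: (@FsetP _ _ _ i); last by rewrite /star_vector eqxx normr1.
- rewrite /star_vector (bigD1 i) //= eqxx.
  rewrite (eq_bigr (fun=> - (n - 1)^-1)) => [|v /negbTE->//].
  rewrite sumr_const cardC1 mulNrn -[_^-1 *+ _]mulr_natr natr_card_pred.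
  by rewrite mulVf ?subrr // lt0r_neq0 // card_pred_gt0.
- move=> v; rewrite /star_vector; case: eqP => _; rewrite ?normr1 //.
  by rewrite normrN ger0_norm // invr_ge0 ltW // card_pred_gt0.
Qed.

Lemma star_vector_step i u v : `|star_vector i u - star_vector i v| <= n / (n - 1).
Proof.
have c_gt0 : 0 < (n - 1)^-1 by rewrite invr_gt0 card_pred_gt0.
have -> : n / (n - 1) = 1 + (n - 1)^-1.
  by field; exact: lt0r_neq0 card_pred_gt0.
by rewrite /star_vector; case: eqP; case: eqP => _ _; rewrite ler_norml;
  apply/andP; split; lra.
Qed.

Definition pair_vector (u w : T) : T -> R := fun v => (v == u)%:R - (v == w)%:R.

Lemma sum_indicator (a : T) : \sum_v ((v == a)%:R : R) = 1.
Proof. by rewrite (bigD1 a) //= eqxx big1 ?addr0 // => v /negbTE->. Qed.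

Lemma pair_vector_Fset u w : u != w -> Fset (pair_vector u w).
Proof.
move=> uw; apply: (@FsetP _ _ _ u).
- by rewrite /pair_vector sumrB !sum_indicator subrr.
- move=> v; rewrite /pair_vector.
  by case: (v == u); case: (v == w); rewrite /= ?mulr1n ?mulr0n ler_norml;
    apply/andP; split; lra.
- by rewrite /pair_vector eqxx (negbTE uw) subr0 normr1.
Qed.

Lemma pair_vector_step (e : rel T) u w a b :
  symmetric e -> ~~ e u w -> e a b -> `|pair_vector u w a - pair_vector u w b| <= 1.
Proof.
move=> e_sym not_uw ab.
have not_uw' : ~~ ((a == u) && (b == w)).
  by apply: contraNN not_uw => /andP[/eqP<- /eqP<-].
have not_wu : ~~ ((a == w) && (b == u)).
  by apply: contraNN not_uw => /andP[/eqP<- /eqP<-]; rewrite e_sym.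
move: not_uw' not_wu; rewrite /pair_vector.
by case: (a == u); case: (b == w); case: (a == w); case: (b == u) => //= _ _;
  rewrite ?mulr1n ?mulr0n ler_norml; apply/andP; split; lra.
Qed.

Definition path_vector (f : T -> 'I_#|T|) : T -> R :=
  fun v => 1 - (f v : nat)%:R * (2 / (n - 1)).

Lemma path_vector_Fset f : bijective f -> Fset (path_vector f).
Proof.
case=> g fK gK; have card_gt0 : (0 < #|T|)%N by exact: ltnW.
have c_gt0 : 0 < 2 / (n - 1) by rewrite divr_gt0 ?card_pred_gt0.
have sum_f : ((\sum_v (f v : nat))%:R : R) * 2 = n * (n - 1).
  have -> : (\sum_v (f v : nat) = 'C(#|T|, 2))%N.
    rewrite -bin2_sum big_mkord (reindex g) /=; last by exists f => k _.
    by apply: eq_bigr => k _; rewrite gK.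
  by rewrite -natrM muln2 double_bin2 natrM natr_card_pred.
apply: (@FsetP _ _ _ (g (Ordinal card_gt0))).
- rewrite sumrB sumr_const -mulr_suml -natr_sum mulrA sum_f mulfK ?subrr //.
  exact: lt0r_neq0 card_pred_gt0.
- move=> v; have f_le : ((f v : nat)%:R : R) * (2 / (n - 1)) <= 2.
    have : ((f v : nat)%:R : R) <= n - 1.
      by rewrite -natr_card_pred ler_nat -ltnS prednK.
    by rewrite mulrA ler_pdivrMr ?card_pred_gt0 //; lra.
  have f_ge : 0 <= ((f v : nat)%:R : R) * (2 / (n - 1)) by rewrite mulr_ge0 // ltW.
  by rewrite /path_vector ler_norml; apply/andP; split; lra.
- by rewrite /path_vector gK mul0r subr0 normr1.
Qed.

Lemma path_vector_step (f : T -> 'I_#|T|) u v :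
  (f u).+1 = f v -> `|path_vector f u - path_vector f v| = 2 / (n - 1).
Proof.
move=> fuv; suff -> : path_vector f u - path_vector f v = 2 / (n - 1).
  by rewrite ger0_norm // divr_ge0 // ltW // card_pred_gt0.
by rewrite /path_vector -fuv -natr1; ring.
Qed.

End Witnesses.

Section Bounds.
Variables (R : realType) (T : finType) (e : rel T).
Hypotheses (e_simple : simple_graph e) (e_connected : connected_graph e).
Hypothesis card_ge2 : (2 <= #|T|)%N.
Local Notation n := (#|T|%:R : R).
Local Notation dist := (dist e_connected).

Lemma iso_path_of_injective_dist i : injective (dist i) -> iso_path e.
Proof.
case: e_simple => e_sym e_irr dist_inj.
pose f v := Ordinal (level_lt_card (@dist_levels _ _ e_connected i) v).
have f_inj : injective f by move=> u v /(congr1 val) /dist_inj.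
exists f; split; first by apply: inj_card_bij => //; rewrite card_ord.
have edge_of_succ u v : (dist i u).+1 = dist i v -> e u v.
  move=> duv; have vi : v != i by rewrite -(dist_eq0 e_connected) -duv.
  by have [w wv] := dist_pred e_connected vi; rewrite -duv => /succn_inj/dist_inj <-.
move=> u v /=; apply/idP/idP => [uv|/orP[]/eqP/edge_of_succ //]; last by rewrite e_sym.
have uv_neq : dist i u != dist i v.
  by rewrite (inj_eq dist_inj); apply: contraTneq uv => ->; rewrite e_irr.
have := dist_edge e_connected i uv; rewrite e_sym in uv.
by have := dist_edge e_connected i uv; move: uv_neq; lia.
Qed.

Lemma sum_dist_gt0 i : (0 < \sum_v dist i v)%N.
Proof.
have /card_gt0P[v vi] : (0 < #|predC1 i|)%N by rewrite cardC1 -ltnS prednK // ltnW.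
by rewrite (bigD1 v) //= lt0n addn_eq0 dist_eq0 (negbTE vi).
Qed.

Lemma sum_dist_complete i : iso_complete e -> (\sum_v dist i v <= #|T|.-1)%N.
Proof.
move=> complete; rewrite -(sum_neq_card i); apply: leq_sum => v _.
have [->|vi] := eqVneq v i; first by rewrite dist_self.
have := dist_edge e_connected i (u := i) (v := v).
by rewrite complete dist_self eq_sym vi; apply.
Qed.

Lemma card_le_sum_dist_gamma_x (x : T -> R) :
  Fset x -> exists i, n <= (\sum_v dist i v)%:R * gamma_x e x.
Proof.
move=> Fx; have [i xi1] := Fset_norm1 Fx; exists i; case: Fx => sum0 _.
have -> : n = `|\sum_v (x i - x v)| by rewrite sumrB sum0 subr0 sumr_const normrMn xi1.
rewrite natr_sum mulr_suml (le_trans (ler_norm_sum _ _ _)) // ler_sum // => v _.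
exact: dist_lipschitz (edge_le_gamma_x x).
Qed.

Lemma natr_card_mul_pred : ((#|T| * #|T|.-1)%N%:R : R) = n * (n - 1).
Proof. by rewrite natrM natr_card_pred. Qed.

Lemma gamma_x_ge_path (x : T -> R) : Fset x -> 2 / (n - 1) <= gamma_x e x.
Proof.
move=> /card_le_sum_dist_gamma_x[i n_le]; set S := (_ %:R) in n_le.
have := double_sum_levels_le (@dist_levels _ _ e_connected i).
rewrite -(ler_nat R) -mul2n natrM natr_card_mul_pred -/S => S_le.
have := gamma_x_ge0 e x; have := card_pred_gt0 R card_ge2.
move=> n1_gt0 g_ge0; rewrite ler_pdivrMr //; nra.
Qed.

Lemma card_mul_pred_gt2 : ~ iso_path e -> 2 < n * (n - 1).
Proof.
move=> not_path; have /card_gt0P[i _] := ltnW card_ge2.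
have not_inj : ~ injective (dist i) by move/iso_path_of_injective_dist.
have := double_sum_levels_lt (@dist_levels _ _ e_connected i) not_inj.
rewrite -natr_card_mul_pred (ltr_nat R 2); have := sum_dist_gt0 i; lia.
Qed.

Lemma gamma_x_ge_not_path (x : T -> R) :
  ~ iso_path e -> Fset x -> 2 * n / (n * (n - 1) - 2) <= gamma_x e x.
Proof.
move=> not_path /card_le_sum_dist_gamma_x[i n_le]; set S := (_ %:R) in n_le.
have not_inj : ~ injective (dist i) by move/iso_path_of_injective_dist.
have := double_sum_levels_lt (@dist_levels _ _ e_connected i) not_inj.
rewrite -(ler_nat R) natrD -mul2n natrM natr_card_mul_pred -/S => S_le.
have := gamma_x_ge0 e x; have := card_mul_pred_gt2 not_path.
move=> D_gt0 g_ge0; rewrite ler_pdivrMr ?subr_gt0 //; nra.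
Qed.

Lemma gamma_x_ge_complete (x : T -> R) :
  iso_complete e -> Fset x -> n / (n - 1) <= gamma_x e x.
Proof.
move=> complete /card_le_sum_dist_gamma_x[i n_le]; set S := (_ %:R) in n_le.
have := sum_dist_complete i complete.
rewrite -(ler_nat R) (natr_card_pred R card_ge2) -/S => S_le.
have := gamma_x_ge0 e x; have := card_pred_gt0 R card_ge2.
move=> n1_gt0 g_ge0; rewrite ler_pdivrMr //; nra.
Qed.

Lemma Fset_nonempty : exists x : T -> R, Fset x.
Proof.
have /card_gt0P[i _] := ltnW card_ge2.
by exists (star_vector R i); exact: star_vector_Fset.
Qed.

Lemma gamma_ge_path : 2 / (n - 1) <= gamma R e.
Proof.
have [x0 Fx0] := Fset_nonempty.
by apply: gamma_ge Fx0 _ => x; exact: gamma_x_ge_path.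
Qed.

Lemma gamma_gt_of_not_path : ~ iso_path e -> 2 / (n - 1) < gamma R e.
Proof.
move=> not_path; have [x0 Fx0] := Fset_nonempty.
have := card_mul_pred_gt2 not_path; have := card_pred_gt0 R card_ge2.
move=> n1_gt0 D_gt0; apply: (@lt_le_trans _ _ (2 * n / (n * (n - 1) - 2))).
  by rewrite ltr_pdivrMr // mulrAC ltr_pdivlMr ?subr_gt0 //; nra.
by apply: gamma_ge Fx0 _ => x; exact: gamma_x_ge_not_path.
Qed.

Lemma gamma_le_of_path : iso_path e -> gamma R e <= 2 / (n - 1).
Proof.
case=> f [f_bij f_e]; apply: gamma_le (path_vector_Fset R card_ge2 f_bij) _ _.
  by rewrite divr_ge0 // ltW // card_pred_gt0.
move=> u v; rewrite f_e => /orP[] /eqP /(path_vector_step R card_ge2) <-; first by [].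
by rewrite distrC.
Qed.

Lemma gamma_le_star : gamma R e <= n / (n - 1).
Proof.
have /card_gt0P[i _] := ltnW card_ge2.
apply: gamma_le (star_vector_Fset R card_ge2 i) _ _.
  by rewrite divr_ge0 // ltW // card_pred_gt0.
by move=> u v _; exact: star_vector_step.
Qed.

Lemma gamma_lt_of_not_complete : ~ iso_complete e -> gamma R e < n / (n - 1).
Proof.
case: e_simple => e_sym e_irr /existsNP[u /existsNP[w uw]].
have u_neq_w : u != w by apply/eqP => u_eq; apply: uw; rewrite u_eq e_irr eqxx.
have not_uw : ~~ e u w by apply/negP => uw_e; apply: uw; rewrite uw_e u_neq_w.
apply: (@le_lt_trans _ _ 1).
  apply: gamma_le (pair_vector_Fset R u_neq_w) _ _ => // a b.
  exact: pair_vector_step.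
have n1_gt0 := card_pred_gt0 R card_ge2; rewrite ltr_pdivlMr //; lra.
Qed.

Lemma gamma_ge_of_complete : iso_complete e -> n / (n - 1) <= gamma R e.
Proof.
move=> complete; have [x0 Fx0] := Fset_nonempty.
by apply: gamma_ge Fx0 _ => x; exact: gamma_x_ge_complete.
Qed.

End Bounds.

Theorem theorem4p7 (R : realType) (T : finType) (e : rel T) :
  simple_graph e -> connected_graph e -> (2 <= #|T|)%N ->
  let n : R := #|T|%:R in
  [/\ 2 / (n - 1) <= gamma R e,
      gamma R e <= n / (n - 1),
      gamma R e = 2 / (n - 1) <-> iso_path e
    & gamma R e = n / (n - 1) <-> iso_complete e].
Proof.
move=> e_simple e_connected card_ge2 n.
have lower := gamma_ge_path R e_connected card_ge2.
have upper := gamma_le_star R e card_ge2.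
have path_lt := gamma_gt_of_not_path R e_simple e_connected card_ge2.
have complete_lt := gamma_lt_of_not_complete R e_simple card_ge2.
split=> //; split.
- by move=> gamma_eq; apply: contrapT => /path_lt; rewrite gamma_eq ltxx.
- move/(gamma_le_of_path R card_ge2) => path_le.
  by apply/le_anti; rewrite path_le lower.
- by move=> gamma_eq; apply: contrapT => /complete_lt; rewrite gamma_eq ltxx.
- move/(gamma_ge_of_complete R e_connected card_ge2) => complete_ge.
  by apply/le_anti; rewrite complete_ge upper.
Qed.
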